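(* Let $f\colon[0,1]\to\mathbb R$ be real analytic. Then for every $\varepsilon>0$ there exists an integer $R\ge 0$ such that for all integers $r\ge R$, $m\ge 1$, $b\ge 1$ and every $B=(B_1,\dots,B_b)\in\mathrm{PTE}(m,b,r)$, the quantities $$c_j=\sum_{i\in B_j}\int_{(i-1)/m}^{i/m} f(x)\,dx,\qquad j=1,\dots,b,$$ satisfy $|c_i-c_j|<\varepsilon$ for all $i,j\in\{1,\dots,b\}$.
   Context: $[m]=\{1,\dots,m\}$. A partition of $[m]$ into $b$ blocks is an ordered list $(B_1,\dots,B_b)$ of pairwise disjoint (possibly empty) subsets with union $[m]$. It is $r$-regular if $\sum_{x\in B_1}x^k=\dots=\sum_{x\in B_b}x^k$ for all $k=0,1,\dots,r$. $\mathrm{PTE}(m,b,r)$ denotes the set of $r$-regular partitions of $[m]$ into $b$ blocks. *)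

From Stdlib Require Import Reals List Arith Lia ClassicalEpsilon.
Import ListNotations.
Open Scope R_scope.

Definition real_analytic_on01 (f : R -> R) : Prop :=
  forall x0, 0 <= x0 <= 1 ->
    exists (a : nat -> R) (rho : R), 0 < rho /\
      forall x, 0 <= x <= 1 -> Rabs (x - x0) < rho -> Pser a (x - x0) (f x).

(* The Riemann integral of f over [a,b] (its value whenever f is Riemann
   integrable there; independent of the integrability proof by RiemannInt_P5). *)
Definition RInt (f : R -> R) (a b : R) : R :=
  epsilon (inhabits 0) (fun v => exists pr : Riemann_integrable f a b, RiemannInt pr = v).

Definition power_sum (k : nat) (l : list nat) : nat :=
  fold_right (fun x acc => (x ^ k + acc)%nat) 0%nat l.

(* B_1, ..., B_b (indices 1..b) is a partition of [m] = {1..m} into b blocks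
   (blocks possibly empty; each block is a duplicate-free list). *)
Definition is_partition (m b : nat) (B : nat -> list nat) : Prop :=
  (forall j, (1 <= j <= b)%nat ->
     NoDup (B j) /\ forall x, In x (B j) -> (1 <= x <= m)%nat) /\
  (forall x, (1 <= x <= m)%nat ->
     exists! j, (1 <= j <= b)%nat /\ In x (B j)).

Definition PTE (m b r : nat) (B : nat -> list nat) : Prop :=
  is_partition m b B /\
  forall k, (k <= r)%nat -> forall i j, (1 <= i <= b)%nat -> (1 <= j <= b)%nat ->
    power_sum k (B i) = power_sum k (B j).

Definition block_integral (f : R -> R) (m : nat) (Bj : list nat) : R :=
  fold_right (fun i acc => RInt f ((INR i - 1) / INR m) (INR i / INR m) + acc) 0 Bj.

From Pilot Require Import Defs.
From Stdlib Require Import Reals List Lia Lra ClassicalEpsilon.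
From Coquelicot Require Import Coquelicot.
Open Scope R_scope.

(* The blocks of an r-regular partition have equal power sums of every
   degree <= r, hence equal sums  sum_{t in B_j} P(t)  for every polynomial P of degree
   <= r.  If p is a polynomial of degree <= n, the cell integral
   t |-> int_{(t-1)/m}^{t/m} p  is again a polynomial of degree <= n in t (the top-degree
   terms cancel), so for r >= n all blocks have the same sum of cell integrals of p.
   Analyticity is only used through continuity: f is continuous on [0,1], so by
   Bernstein's theorem some polynomial p of degree n is within eps/3 of f on [0,1].
   Replacing f by p changes each cell integral by at most eps/(3m), and a block has at
   most m cells, so each c_j moves by at most eps/3; with R = n this gives
   |c_i - c_j| <= 2 eps/3 < eps. *)

Definition poly_le (r : nat) (g : R -> R) : Prop :=
  exists c : nat -> R, forall t, g t = sum_f_R0 (fun l => c l * t ^ l) r.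

Lemma poly_le_ext r g h : poly_le r g -> (forall t, g t = h t) -> poly_le r h.
Proof. intros [c Hc] H; exists c; intro t; rewrite <- H; auto. Qed.

Lemma poly_le_S r g : poly_le r g -> poly_le (S r) g.
Proof.
  intros [c Hc]. exists (fun l => if Nat.leb l r then c l else 0).
  intro t; rewrite tech5, Hc.
  replace (Nat.leb (S r) r) with false by (symmetry; apply Nat.leb_gt; lia).
  rewrite Rmult_0_l, Rplus_0_r. apply sum_eq; intros i Hi.
  replace (Nat.leb i r) with true by (symmetry; apply Nat.leb_le; lia). reflexivity.
Qed.

Lemma poly_le_weaken r s g : (r <= s)%nat -> poly_le r g -> poly_le s g.
Proof. induction 1; auto using poly_le_S. Qed.

Lemma poly_le_const a : poly_le 0 (fun _ => a).
Proof. exists (fun _ => a); intro t; simpl; ring. Qed.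

Lemma poly_le_add r g h : poly_le r g -> poly_le r h -> poly_le r (fun t => g t + h t).
Proof.
  intros [c Hc] [d Hd]; exists (fun l => c l + d l); intro t.
  rewrite Hc, Hd, <- sum_plus; apply sum_eq; intros; ring.
Qed.

Lemma poly_le_scal r a g : poly_le r g -> poly_le r (fun t => a * g t).
Proof.
  intros [c Hc]; exists (fun l => a * c l); intro t.
  rewrite Hc, scal_sum; apply sum_eq; intros; ring.
Qed.

Lemma poly_le_mulx r g : poly_le r g -> poly_le (S r) (fun t => t * g t).
Proof.
  intros [c Hc]; exists (fun l => match l with O => 0 | S l => c l end); intro t.
  rewrite decomp_sum by lia; simpl pred. rewrite Hc, scal_sum.
  rewrite Rmult_0_l, Rplus_0_l. apply sum_eq; intros; simpl; ring.
Qed.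

Lemma poly_le_sum r n (G : nat -> R -> R) : (forall l, (l <= n)%nat -> poly_le r (G l)) ->
  poly_le r (fun t => sum_f_R0 (fun l => G l t) n).
Proof.
  induction n; intro H; simpl.
  - apply (H 0%nat); lia.
  - apply poly_le_add; [apply IHn; intros; apply H; lia | apply H; lia].
Qed.

Lemma poly_le_shifted_pow k : poly_le k (fun t => (t - 1) ^ k).
Proof.
  induction k; simpl.
  - apply poly_le_const.
  - eapply poly_le_ext.
    + apply poly_le_add;
        [apply (poly_le_mulx _ _ IHk) | apply poly_le_S, (poly_le_scal _ (-1) _ IHk)].
    + intro t; simpl; ring.
Qed.

(* The leading terms of t^(l+1) and (t-1)^(l+1) cancel: their difference has degree l.
   This is why integrating over a cell of length 1/m does not raise the degree. *)
Lemma poly_le_pow_difference l : poly_le l (fun t => t ^ S l - (t - 1) ^ S l).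
Proof.
  induction l.
  - eapply poly_le_ext; [apply (poly_le_const 1) | intro; simpl; ring].
  - eapply poly_le_ext.
    + apply poly_le_add; [apply (poly_le_mulx _ _ IHl) | apply poly_le_shifted_pow].
    + intro t; simpl; ring.
Qed.

Definition lsum (g : R -> R) (L : list nat) : R :=
  fold_right (fun t acc => g (INR t) + acc) 0 L.

Lemma lsum_ext g h L : (forall t, g t = h t) -> lsum g L = lsum h L.
Proof. intro H; induction L; simpl; [reflexivity | rewrite H, IHL; reflexivity]. Qed.

Lemma lsum_minus g h L : lsum (fun s => g s - h s) L = lsum g L - lsum h L.
Proof. induction L; simpl; [ring | rewrite IHL; ring]. Qed.

Lemma lsum_polynomial c r L :
  lsum (fun t => sum_f_R0 (fun l => c l * t ^ l) r) L =
  sum_f_R0 (fun l => c l * INR (power_sum l L)) r.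
Proof.
  induction L as [|x L IH]; simpl.
  - transitivity (sum_f_R0 (fun _ => 0) r); [| apply sum_eq; intros; simpl; ring].
    rewrite sum_cte; ring.
  - rewrite IH, <- sum_plus. apply sum_eq; intros i _.
    rewrite plus_INR, pow_INR; ring.
Qed.

Lemma lsum_poly_eq r g L1 L2 : poly_le r g ->
  (forall k, (k <= r)%nat -> power_sum k L1 = power_sum k L2) ->
  lsum g L1 = lsum g L2.
Proof.
  intros [c Hc] H.
  rewrite (lsum_ext _ _ L1 Hc), (lsum_ext _ _ L2 Hc), !lsum_polynomial.
  apply sum_eq; intros i Hi; rewrite H; auto.
Qed.

Lemma lsum_bound g L c : (forall t, In t L -> Rabs (g (INR t)) <= c) ->
  Rabs (lsum g L) <= INR (length L) * c.
Proof.
  induction L as [|x L IH]; intro H; simpl lsum; cbn [length].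
  - rewrite Rabs_R0; simpl; lra.
  - rewrite S_INR. eapply Rle_trans; [apply Rabs_triang |].
    assert (Rabs (g (INR x)) <= c) by (apply H; left; auto).
    assert (Rabs (lsum g L) <= INR (length L) * c) by (apply IH; intros; apply H; right; auto).
    unfold lsum in *; lra.
Qed.

Lemma length_NoDup_range m L : NoDup L -> (forall x, In x L -> (1 <= x <= m)%nat) ->
  (length L <= m)%nat.
Proof.
  intros Hnd Hin. rewrite <- (length_seq m 1).
  apply NoDup_incl_length; auto. intros t Ht. apply in_seq. specialize (Hin t Ht). lia.
Qed.

(* The Bernstein basis polynomials b_{n,k}(x) = C(n,k) x^k (1-x)^(n-k), defined by
   their Pascal-type recursion (b_{n,k} = 0 for k > n). *)
Fixpoint bernstein_basis (n k : nat) (x : R) : R :=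
  match n with
  | O => match k with O => 1 | S _ => 0 end
  | S n' => match k with
            | O => (1 - x) * bernstein_basis n' O x
            | S k' => (1 - x) * bernstein_basis n' k x + x * bernstein_basis n' k' x
            end
  end.

Lemma bernstein_basis_above n k x : (n < k)%nat -> bernstein_basis n k x = 0.
Proof.
  revert k; induction n; intros k Hk; destruct k; simpl; try lia; try reflexivity.
  rewrite !IHn by lia. ring.
Qed.

Lemma bernstein_basis_nonneg n k x : 0 <= x <= 1 -> 0 <= bernstein_basis n k x.
Proof.
  intro Hx; revert k; induction n; intro k; destruct k; simpl; try lra.
  - specialize (IHn 0%nat); nra.
  - pose proof (IHn (S k)); pose proof (IHn k). nra.
Qed.

Lemma bernstein_basis_poly n k : poly_le n (bernstein_basis n k).
Proof.
  revert k; induction n; intro k.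
  - destruct k; [apply (poly_le_const 1) | apply (poly_le_const 0)].
  - assert (Hstep : forall j, poly_le (S n) (fun x => (1 - x) * bernstein_basis n j x)).
    { intro j. eapply poly_le_ext.
      - apply poly_le_add;
          [apply poly_le_S, (IHn j) | apply poly_le_mulx, (poly_le_scal _ (-1)), (IHn j)].
      - intro; simpl; ring. }
    destruct k; simpl; [apply Hstep |].
    apply poly_le_add; [apply Hstep | apply poly_le_mulx, IHn].
Qed.

Definition bernstein (n : nat) (g : nat -> R) (x : R) : R :=
  sum_f_R0 (fun k => g k * bernstein_basis n k x) n.

Lemma bernstein_poly n g : poly_le n (bernstein n g).
Proof.
  apply poly_le_sum. intros l _. apply poly_le_scal, bernstein_basis_poly.
Qed.

Lemma bernstein_S n g x :
  bernstein (S n) g x = (1 - x) * bernstein n g x + x * bernstein n (fun k => g (S k)) x.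
Proof.
  unfold bernstein. rewrite decomp_sum by lia. simpl pred. simpl bernstein_basis.
  transitivity ((1 - x) * sum_f_R0 (fun k => g k * bernstein_basis n k x) (S n)
               + x * sum_f_R0 (fun k => g (S k) * bernstein_basis n k x) n).
  - rewrite (decomp_sum (fun k => g k * bernstein_basis n k x) (S n)) by lia. simpl pred.
    rewrite Rmult_plus_distr_l, !scal_sum, Rplus_assoc, <- sum_plus.
    f_equal; [ring |]. apply sum_eq; intros; ring.
  - rewrite tech5, bernstein_basis_above by lia. ring.
Qed.

Lemma bernstein_ext n g h x : (forall k, g k = h k) -> bernstein n g x = bernstein n h x.
Proof. intro H; unfold bernstein; apply sum_eq; intros; rewrite H; auto. Qed.

Lemma bernstein_lin n a b c g1 g2 g3 x :
  bernstein n (fun k => a * g1 k + b * g2 k + c * g3 k) x =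
  a * bernstein n g1 x + b * bernstein n g2 x + c * bernstein n g3 x.
Proof.
  unfold bernstein. rewrite !scal_sum, <- !sum_plus. apply sum_eq; intros; ring.
Qed.

Lemma bernstein_one n x : bernstein n (fun _ => 1) x = 1.
Proof.
  induction n; [unfold bernstein; simpl; ring |]. rewrite bernstein_S, IHn; ring.
Qed.

Lemma bernstein_id n x : bernstein n INR x = INR n * x.
Proof.
  induction n; [unfold bernstein; simpl; ring |]. rewrite bernstein_S, IHn.
  rewrite (bernstein_ext _ _ (fun k => 1 * INR k + 1 * 1 + 0 * 1))
    by (intro; rewrite S_INR; ring).
  rewrite bernstein_lin, IHn, bernstein_one, S_INR; ring.
Qed.

Lemma bernstein_square n x :
  bernstein n (fun k => INR k ^ 2) x = INR n * x * (1 - x) + (INR n * x) ^ 2.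
Proof.
  induction n; [unfold bernstein; simpl; ring |]. rewrite bernstein_S, IHn.
  rewrite (bernstein_ext _ _ (fun k => 1 * INR k ^ 2 + 2 * INR k + 1 * 1))
    by (intro; rewrite S_INR; ring).
  rewrite bernstein_lin, IHn, bernstein_id, bernstein_one, S_INR; ring.
Qed.

Lemma bernstein_variance n x : (0 < n)%nat ->
  bernstein n (fun k => (INR k / INR n - x) ^ 2) x = x * (1 - x) / INR n.
Proof.
  intro Hn. assert (HN : INR n <> 0) by (apply not_0_INR; lia).
  rewrite (bernstein_ext _ _
             (fun k => (/ INR n ^ 2) * INR k ^ 2 + (- 2 * x / INR n) * INR k + (x ^ 2) * 1))
    by (intro; field; auto).
  rewrite bernstein_lin, bernstein_square, bernstein_id, bernstein_one. field; auto.
Qed.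

(* On [0,1] the basis is nonnegative, so B_n is monotone and contracts absolute values. *)
Lemma bernstein_abs_le n h x : 0 <= x <= 1 ->
  Rabs (bernstein n h x) <= bernstein n (fun k => Rabs (h k)) x.
Proof.
  intro Hx. unfold bernstein. eapply Rle_trans; [apply sum_f_R0_triangle |].
  apply sum_Rle; intros k _. rewrite Rabs_mult, (Rabs_right (bernstein_basis n k x)).
  - lra.
  - apply Rle_ge, bernstein_basis_nonneg; auto.
Qed.

Lemma bernstein_mono n h1 h2 x : 0 <= x <= 1 -> (forall k, (k <= n)%nat -> h1 k <= h2 k) ->
  bernstein n h1 x <= bernstein n h2 x.
Proof.
  intros Hx H. unfold bernstein. apply sum_Rle; intros k Hk.
  apply Rmult_le_compat_r; [apply bernstein_basis_nonneg; auto | auto].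
Qed.

(* A function bounded by M whose oscillation is below e at distance < d satisfies
   |g x - g y| <= e + (2M/d^2)(y - x)^2 at every pair of points: the quadratic term
   pays for the pairs that are far apart. *)
Lemma oscillation_quadratic_bound g M d e x y :
  0 < d -> 0 < e -> (forall z, 0 <= z <= 1 -> Rabs (g z) <= M) ->
  (forall u v, 0 <= u <= 1 -> 0 <= v <= 1 -> Rabs (u - v) < d -> Rabs (g u - g v) < e) ->
  0 <= x <= 1 -> 0 <= y <= 1 ->
  Rabs (g x - g y) <= e + 2 * M / d ^ 2 * (y - x) ^ 2.
Proof.
  intros Hd He Hbound Hosc Hx Hy.
  assert (HM : 0 <= M) by (eapply Rle_trans; [apply Rabs_pos | apply (Hbound x Hx)]).
  assert (Hq : 0 <= 2 * M / d ^ 2 * (y - x) ^ 2).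
  { apply Rmult_le_pos; [| apply pow2_ge_0].
    apply Rmult_le_pos; [lra | left; apply Rinv_0_lt_compat, pow_lt; lra]. }
  destruct (Rlt_dec (Rabs (x - y)) d) as [Hnear | Hfar].
  - pose proof (Hosc x y Hx Hy Hnear). lra.
  - assert (Hd2 : d ^ 2 <= (y - x) ^ 2).
    { rewrite <- (pow2_abs (y - x)), Rabs_minus_sym. apply pow_incr; lra. }
    assert (H2M : 2 * M <= 2 * M / d ^ 2 * (y - x) ^ 2).
    { replace (2 * M / d ^ 2 * (y - x) ^ 2) with (2 * M * ((y - x) ^ 2 / d ^ 2))
        by (field; lra).
      rewrite <- (Rmult_1_r (2 * M)) at 1. apply Rmult_le_compat_l; [lra |].
      apply Rmult_le_reg_r with (d ^ 2); [apply pow_lt; lra |].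
      unfold Rdiv; rewrite Rmult_assoc, Rinv_l by (apply pow_nonzero; lra). lra. }
    pose proof (Hbound x Hx); pose proof (Hbound y Hy).
    pose proof (Rabs_triang (g x) (- g y)). rewrite Rabs_Ropp in *. unfold Rminus. lra.
Qed.

Lemma sample_point_range n k : (0 < n)%nat -> (k <= n)%nat -> 0 <= INR k / INR n <= 1.
Proof.
  intros Hn Hk. assert (HN : 0 < INR n) by (apply lt_0_INR; lia).
  apply le_INR in Hk. split.
  - apply Rmult_le_pos; [apply pos_INR | left; apply Rinv_0_lt_compat; auto].
  - apply Rmult_le_reg_r with (INR n); auto. unfold Rdiv.
    rewrite Rmult_assoc, Rinv_l by lra. lra.
Qed.

Theorem bernstein_approximation (g : R -> R) :
  (forall x, 0 <= x <= 1 -> continuity_pt g x) ->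
  forall eps, 0 < eps -> exists n, forall x, 0 <= x <= 1 ->
    Rabs (g x - bernstein n (fun k => g (INR k / INR n)) x) <= eps.
Proof.
  intros Hc eps Heps.
  assert (He2 : 0 < eps / 2) by lra.
  destruct (Heine_cor2 (f := g) (a := 0) (b := 1) Hc (mkposreal _ He2)) as [[d Hd] Hosc]; simpl in Hosc.
  destruct (continuity_ab_maj (fun x => Rabs (g x)) 0 1) as [xM [HM _]]; [lra | |].
  { intros c Hc'. apply (continuity_pt_comp g Rabs); [auto | apply Rcontinuity_abs]. }
  set (K := 2 * Rabs (g xM) / d ^ 2).
  assert (HK : 0 <= K).
  { apply Rmult_le_pos; [pose proof (Rabs_pos (g xM)); lra |].
    left; apply Rinv_0_lt_compat, pow_lt; lra. }
  destruct (INR_unbounded (2 * K / eps)) as [n0 Hn0].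
  set (n := S n0). assert (Hn : 0 < INR n) by (apply lt_0_INR; unfold n; lia).
  assert (HnK : K <= eps / 2 * INR n).
  { assert (eps * (2 * K / eps) = 2 * K) by (field; lra).
    assert (INR n > 2 * K / eps) by (unfold n; rewrite S_INR; lra). nra. }
  exists n. intros x Hx.
  assert (Hdiff : g x - bernstein n (fun k => g (INR k / INR n)) x =
                  bernstein n (fun k => g x * 1 + (-1) * g (INR k / INR n) + 0 * 1) x)
    by (rewrite bernstein_lin, bernstein_one; ring).
  rewrite Hdiff. eapply Rle_trans; [apply bernstein_abs_le; auto |].
  eapply Rle_trans.
  - apply (bernstein_mono n _ (fun k => eps / 2 * 1 + K * (INR k / INR n - x) ^ 2 + 0 * 1) x Hx).
    intros k Hk. replace (g x * 1 + -1 * g (INR k / INR n) + 0 * 1)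
      with (g x - g (INR k / INR n)) by ring.
    rewrite Rmult_1_r, Rmult_0_l, Rplus_0_r.
    apply oscillation_quadratic_bound; auto.
    apply sample_point_range; auto. unfold n; lia.
  - rewrite bernstein_lin, bernstein_one, bernstein_variance by (unfold n; lia).
    assert (K * (x * (1 - x) / INR n) <= eps / 2).
    { apply Rmult_le_reg_r with (INR n); auto.
      replace (K * (x * (1 - x) / INR n) * INR n) with (K * (x * (1 - x))) by (field; lra).
      nra. }
    lra.
Qed.

Corollary weierstrass_approximation (g : R -> R) :
  (forall x, 0 <= x <= 1 -> continuity_pt g x) ->
  forall eps, 0 < eps -> exists n p, poly_le n p /\
    forall x, 0 <= x <= 1 -> Rabs (g x - p x) <= eps.
Proof.
  intros Hc eps Heps. destruct (bernstein_approximation g Hc eps Heps) as [n Hn].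
  exists n, (bernstein n (fun k => g (INR k / INR n))). split; auto using bernstein_poly.
Qed.

Lemma is_RInt_polynomial d n a b :
  is_RInt (fun x => sum_f_R0 (fun l => d l * x ^ l) n) a b
    (sum_f_R0 (fun l => d l * (b ^ S l / INR (S l) - a ^ S l / INR (S l))) n).
Proof.
  induction n; simpl sum_f_R0.
  - exact (is_RInt_scal _ a b (d 0%nat) _ (is_RInt_pow a b 0)).
  - exact (is_RInt_plus _ _ a b _ _ IHn
             (is_RInt_scal _ a b (d (S n)) _ (is_RInt_pow a b (S n)))).
Qed.

Lemma poly_le_ex_RInt n p a b : poly_le n p -> ex_RInt p a b.
Proof.
  intros [d Hd]. eexists. eapply is_RInt_ext; [| apply is_RInt_polynomial].
  intros x _; symmetry; apply Hd.
Qed.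

Lemma poly_le_cell_integral n p M : M <> 0 -> poly_le n p ->
  poly_le n (fun t => RInt p ((t - 1) / M) (t / M)).
Proof.
  intros HM [d Hd].
  apply poly_le_ext with (fun t => sum_f_R0 (fun l =>
      d l * ((t / M) ^ S l / INR (S l) - ((t - 1) / M) ^ S l / INR (S l))) n).
  - apply poly_le_sum; intros l Hl. eapply poly_le_ext.
    + apply (poly_le_weaken l n _ Hl),
        (poly_le_scal _ (d l / INR (S l) * (/ M) ^ S l) _ (poly_le_pow_difference l)).
    + intro t. unfold Rdiv. rewrite !Rpow_mult_distr. ring.
  - intro t. symmetry. apply is_RInt_unique.
    eapply is_RInt_ext; [| apply is_RInt_polynomial]. intros x _; symmetry; apply Hd.
Qed.

(* The integral RInt of the statement agrees with Coquelicot's wherever the latter exists. *)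
Lemma RInt_statement_eq f a b : ex_RInt f a b -> Defs.RInt f a b = RInt f a b.
Proof.
  intro Hf.
  destruct (epsilon_spec (inhabits 0)
              (fun v => exists pr : Riemann_integrable f a b, RiemannInt pr = v))
    as [pr Hpr].
  { exists (RiemannInt (ex_RInt_Reals_0 _ _ _ Hf)). eexists; reflexivity. }
  unfold Defs.RInt. rewrite <- Hpr. symmetry; apply RInt_Reals.
Qed.

(* The clamp of x into [0,1]; composing with it extends a function on [0,1] to R. *)
Definition clamp01 (x : R) : R := Rmax 0 (Rmin 1 x).

Lemma clamp01_lipschitz x y : Rabs (clamp01 x - clamp01 y) <= Rabs (x - y).
Proof.
  unfold clamp01, Rmax, Rmin; repeat destruct Rle_dec; unfold Rabs;
  repeat destruct Rcase_abs; lra.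
Qed.

Lemma clamp01_id x : 0 <= x <= 1 -> clamp01 x = x.
Proof. unfold clamp01, Rmax, Rmin; intros; repeat destruct Rle_dec; lra. Qed.

Lemma clamp01_range x : 0 <= clamp01 x <= 1.
Proof. unfold clamp01, Rmax, Rmin; repeat destruct Rle_dec; lra. Qed.

Lemma clamp01_continuous x : continuity_pt clamp01 x.
Proof.
  intros eps Heps. exists eps; split; [lra |].
  intros y [_ Hy]. simpl in *. unfold R_dist in *.
  eapply Rle_lt_trans; [apply clamp01_lipschitz | auto].
Qed.

Lemma Pser_radius_lower_bound a y l : Pser a y l -> Rbar_le (Rabs y) (CV_radius a).
Proof.
  intro Hser. apply is_pseries_Reals in Hser.
  destruct (Rbar_le_dec (Rabs y) (CV_radius a)) as [H | H]; auto.
  exfalso. apply Rbar_not_le_lt in H. apply (CV_disk_outside a y H).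
  eapply is_lim_seq_ext; [| apply ex_series_lim_0; exists l; exact Hser].
  intro n; simpl. rewrite pow_n_pow.
  change (scal (y ^ n) (a n)) with (y ^ n * a n). ring.
Qed.

Lemma nearby_point01 x0 rho : 0 <= x0 <= 1 -> 0 < rho ->
  exists y, 0 <= y <= 1 /\ 0 < Rabs (y - x0) < rho.
Proof.
  intros Hx0 Hrho. set (s := Rmin rho (1 / 2) / 2).
  assert (Hs : 0 < s < rho /\ s <= 1 / 4) by (unfold s, Rmin; destruct Rle_dec; lra).
  destruct (Rle_dec x0 (1 / 2)).
  - exists (x0 + s). replace (x0 + s - x0) with s by ring. rewrite Rabs_right; lra.
  - exists (x0 - s). replace (x0 - s - x0) with (- s) by ring.
    rewrite Rabs_Ropp, Rabs_right; lra.
Qed.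

(* Near x0, an analytic f (extended by clamping) is the sum of a power series whose
   radius of convergence is positive, hence it is continuous at x0. *)
Lemma analytic_clamp_continuous (f : R -> R) : real_analytic_on01 f ->
  forall x0, 0 <= x0 <= 1 -> continuity_pt (fun x => f (clamp01 x)) x0.
Proof.
  intros Hf x0 Hx0.
  destruct (Hf x0 Hx0) as [a [rho [Hrho Ha]]].
  destruct (nearby_point01 x0 rho Hx0 Hrho) as [y0 [Hy0 Hdist]].
  assert (Hrad : Rbar_lt 0 (CV_radius a)).
  { eapply Rbar_lt_le_trans; [| apply (Pser_radius_lower_bound a (y0 - x0) (f y0))].
    - simpl; lra.
    - apply Ha; lra. }
  assert (Hseries : continuity_pt (fun x => PSeries a (clamp01 x - x0)) x0).
  { apply (continuity_pt_comp (fun x => clamp01 x - x0) (PSeries a)).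
    - apply continuity_pt_minus; [apply clamp01_continuous | apply continuity_pt_const].
      intros u v; reflexivity.
    - rewrite clamp01_id, Rminus_diag by auto. apply PSeries_continuity.
      rewrite Rabs_R0; auto. }
  refine (continuity_pt_locally_ext _ _ rho x0 Hrho _ Hseries).
  intros y Hy. unfold Rdist in Hy. apply is_pseries_unique, is_pseries_Reals, Ha; [apply clamp01_range |].
  rewrite <- (clamp01_id x0 Hx0) at 1.
  eapply Rle_lt_trans; [apply clamp01_lipschitz | exact Hy].
Qed.

Lemma ex_RInt_continuous01 f g a b :
  (forall x, 0 <= x <= 1 -> f x = g x) -> (forall x, 0 <= x <= 1 -> continuity_pt g x) ->
  0 <= a <= b -> b <= 1 -> ex_RInt f a b.
Proof.
  intros Hfg Hc Hab Hb1.
  apply ex_RInt_ext with g.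
  - intros x Hx. rewrite Rmin_left, Rmax_right in Hx by lra. symmetry; apply Hfg; lra.
  - apply (ex_RInt_continuous (V := R_CompleteNormedModule)). intros z Hz.
    rewrite Rmin_left, Rmax_right in Hz by lra.
    apply continuity_pt_filterlim, Hc; lra.
Qed.

Definition cell_integral (p : R -> R) (m : nat) (t : R) : R :=
  RInt p ((t - 1) / INR m) (t / INR m).

Lemma block_integral_lsum f m L :
  block_integral f m L = lsum (fun t => Defs.RInt f ((t - 1) / INR m) (t / INR m)) L.
Proof. induction L; simpl; congruence. Qed.

Lemma cell_integral_error f p eta m t :
  (forall a b, 0 <= a <= b -> b <= 1 -> ex_RInt f a b) -> (forall a b, ex_RInt p a b) ->
  (forall x, 0 <= x <= 1 -> Rabs (f x - p x) <= eta) -> (1 <= t <= m)%nat ->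
  Rabs (Defs.RInt f ((INR t - 1) / INR m) (INR t / INR m) - cell_integral p m (INR t))
    <= eta / INR m.
Proof.
  intros Hf Hp Happrox Ht.
  assert (HM : 0 < INR m) by (apply lt_0_INR; lia).
  assert (Ht1 : 1 <= INR t) by (apply (le_INR 1); lia).
  assert (HtM : INR t <= INR m) by (apply le_INR; lia).
  unfold cell_integral.
  set (a := (INR t - 1) / INR m). set (b := INR t / INR m).
  assert (Ha : 0 <= a) by (apply Rmult_le_pos; [lra | left; apply Rinv_0_lt_compat; auto]).
  assert (Hba : b - a = / INR m) by (unfold a, b; field; lra).
  assert (Hb : b <= 1).
  { apply Rmult_le_reg_r with (INR m); auto. unfold b, Rdiv.
    rewrite Rmult_assoc, Rinv_l by lra. lra. }
  assert (Hab : a <= b) by (pose proof (Rinv_0_lt_compat _ HM); lra).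
  assert (Hfab : ex_RInt f a b) by (apply Hf; lra).
  rewrite RInt_statement_eq by exact Hfab.
  change (Rabs (minus (RInt f a b) (RInt p a b)) <= eta / INR m).
  rewrite <- (RInt_minus f p a b Hfab (Hp a b)).
  replace (eta / INR m) with ((b - a) * eta) by (rewrite Hba; field; lra).
  apply abs_RInt_le_const; [lra | apply (ex_RInt_minus f p a b Hfab (Hp a b)) |].
  intros x Hx. apply Happrox. lra.
Qed.

Lemma block_integral_error f p eta m L :
  (forall a b, 0 <= a <= b -> b <= 1 -> ex_RInt f a b) -> (forall a b, ex_RInt p a b) ->
  (forall x, 0 <= x <= 1 -> Rabs (f x - p x) <= eta) -> (1 <= m)%nat ->
  NoDup L -> (forall t, In t L -> (1 <= t <= m)%nat) ->
  Rabs (block_integral f m L - lsum (cell_integral p m) L) <= eta.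
Proof.
  intros Hf Hp Happrox Hm Hnd Hin.
  assert (HM : 0 < INR m) by (apply lt_0_INR; lia).
  assert (Heta : 0 <= eta).
  { eapply Rle_trans; [apply Rabs_pos | apply (Happrox 0); lra]. }
  rewrite block_integral_lsum, <- lsum_minus.
  eapply Rle_trans.
  - apply (lsum_bound _ _ (eta / INR m)). intros t Ht.
    apply cell_integral_error; auto.
  - pose proof (le_INR _ _ (length_NoDup_range m L Hnd Hin)).
    replace eta with (INR m * (eta / INR m)) at 2 by (field; lra).
    apply Rmult_le_compat_r; [apply Rmult_le_pos; [lra | left; apply Rinv_0_lt_compat; lra] | auto].
Qed.

Theorem mainTheorem16 (f : R -> R) (Hf : real_analytic_on01 f) :
  forall eps : R, 0 < eps ->
  exists R0 : nat, forall (r m b : nat), (R0 <= r)%nat -> (1 <= m)%nat -> (1 <= b)%nat ->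
    forall B : nat -> list nat, PTE m b r B ->
    forall i j, (1 <= i <= b)%nat -> (1 <= j <= b)%nat ->
      Rabs (block_integral f m (B i) - block_integral f m (B j)) < eps.
Proof.
  intros eps Heps.
  set (g := fun x => f (clamp01 x)).
  assert (Hg : forall x, 0 <= x <= 1 -> continuity_pt g x)
    by (apply analytic_clamp_continuous; auto).
  assert (Hfg : forall x, 0 <= x <= 1 -> f x = g x)
    by (intros; unfold g; rewrite clamp01_id; auto).
  destruct (weierstrass_approximation g Hg (eps / 3)) as [n [p [Hp Happrox]]]; [lra |].
  exists n. intros r m b Hr Hm _ B [[Hblocks _] Hpow] i j Hi Hj.
  assert (Hcells : lsum (cell_integral p m) (B i) = lsum (cell_integral p m) (B j)).
  { apply (lsum_poly_eq r); [| intros k Hk; apply Hpow; auto; lia].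
    apply (poly_le_weaken n r); auto. apply poly_le_cell_integral; auto.
    apply not_0_INR; lia. }
  assert (Herror : forall k, (1 <= k <= b)%nat ->
            Rabs (block_integral f m (B k) - lsum (cell_integral p m) (B k)) <= eps / 3).
  { intros k Hk. destruct (Hblocks k Hk) as [Hnd Hin].
    apply block_integral_error; auto.
    - intros a c Hac Hc1. apply (ex_RInt_continuous01 f g); auto.
    - intros a c. apply (poly_le_ex_RInt n); auto.
    - intros x Hx. rewrite Hfg by auto. apply Happrox; auto. }
  pose proof (Herror i Hi) as Hei. pose proof (Herror j Hj) as Hej.
  rewrite Hcells in Hei. unfold Rabs in *. repeat destruct Rcase_abs; lra.
Qed.
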